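(* Let $d\ge 2$ and $1\le k\le d^2$ be integers. Let $A,B,C,D$ be quantum systems, each with Hilbert space $\mathbb{C}^d$, and let $\psi^+_{XY}=|\psi^+\rangle\langle\psi^+|_{XY}$ with $|\psi^+\rangle=\frac{1}{\sqrt d}\sum_{i=0}^{d-1}|i\rangle|i\rangle$ denote the maximally entangled state on a pair of such systems $X,Y$. For a POVM $\{M^{(i)}_{DA}\}_{i=1}^{k}$ on $DA$ (i.e. $M^{(i)}_{DA}\ge 0$ and $\sum_{i=1}^k M^{(i)}_{DA}=\mathbf 1_{DA}$) and unitaries $\{U^{(i)}_B\}_{i=1}^k$ on $B$, define $$F\big(\{M^{(i)}_{DA},U^{(i)}_B\}\big)=\sum_{i=1}^{k}\operatorname{tr}\Big[\psi^+_{CB}\,U^{(i)}_B\,\operatorname{tr}_{AD}\big[(M^{(i)}_{DA}\otimes\mathbf 1_{CB})(\psi^+_{AB}\otimes\psi^+_{CD})\big]\,U^{(i)\dagger}_B\Big].$$ Then $$\max_{\{M^{(i)}_{DA},U^{(i)}_B\}} F\big(\{M^{(i)}_{DA},U^{(i)}_B\}\big)=\frac{k}{d^2},$$ where the maximum runs over all $k$-outcome POVMs on $DA$ and all choices of unitaries on $B$.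
   Context: This quantity is the entanglement fidelity of a teleportation protocol in which Alice measures $DA$ with a $k$-outcome POVM, communicates the outcome $i$ to Bob, and Bob applies the correction $U^{(i)}_B$; the goal is for $C$ and $B$ to end up maximally entangled. *)

(* Scalars: an arbitrary numClosedFieldType C (e.g. the
   complex numbers R[i] over a real closed / real field, or algC).
   Operators on a finite-dimensional Hilbert space with orthonormal basis
   indexed by a finType T are represented by their matrix entries
   X : T -> T -> C  (X i j = <i|X|j>). *)
From mathcomp Require Import all_boot all_order all_algebra.
Set Implicit Arguments. Unset Strict Implicit. Unset Printing Implicit Defensive.
Import Order.TTheory GRing.Theory Num.Theory.
Local Open Scope ring_scope.

Section Ops.
Variable C : numClosedFieldType.

Definition op (T : finType) := T -> T -> C.

Definition oneo (T : finType) : op T := fun i j => (i == j)%:R.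
Definition mulo (T : finType) (X Y : op T) : op T :=
  fun i j => \sum_(l : T) X i l * Y l j.
Definition adjo (T : finType) (X : op T) : op T := fun i j => (X j i)^*.
Definition tro (T : finType) (X : op T) : C := \sum_(i : T) X i i.
Definition psd (T : finType) (X : op T) : Prop :=
  forall v : T -> C, 0 <= \sum_(i : T) \sum_(j : T) (v i)^* * X i j * v j.
Definition unitary (T : finType) (U : op T) : Prop :=
  (forall i j, mulo U (adjo U) i j = oneo i j) /\
  (forall i j, mulo (adjo U) U i j = oneo i j).
Definition povm (T : finType) (k : nat) (M : 'I_k -> op T) : Prop :=
  (forall i, psd (M i)) /\ (forall x y, \sum_(i < k) M i x y = oneo x y).
Definition tenso (S T : finType) (X : op S) (Y : op T) : op (S * T)%type :=
  fun p q => X p.1 q.1 * Y p.2 q.2.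
Definition proj (T : finType) (v : T -> C) : op T := fun i j => v i * (v j)^*.

Definition psiplus_vec (d : nat) : ('I_d * 'I_d)%type -> C :=
  fun p => (p.1 == p.2)%:R / sqrtC d%:R.
Definition psiplus (d : nat) : op ('I_d * 'I_d)%type := proj (@psiplus_vec d).

(* The four systems A,B,C,D, each C^d.  Joint index ordered (a, b, c, dd). *)
Definition idx4 (d : nat) := ('I_d * 'I_d * 'I_d * 'I_d)%type.

Definition state_ABCD (d : nat) : op (idx4 d) :=
  fun p q =>
    let: (a, b, c, dd) := p in let: (a', b', c', dd') := q in
    @psiplus d (a, b) (a', b') * @psiplus d (c, dd) (c', dd').

(* M_{DA} (x) 1_{CB}, as an operator on ABCD (M indexed by (dd, a)) *)
Definition embed_DA (d : nat) (M : op ('I_d * 'I_d)%type) : op (idx4 d) :=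
  fun p q =>
    let: (a, b, c, dd) := p in let: (a', b', c', dd') := q in
    M (dd, a) (dd', a') * oneo b b' * oneo c c'.

(* partial trace over A and D; result is an operator on CB, indexed (c, b) *)
Definition ptr_AD (d : nat) (X : op (idx4 d)) : op ('I_d * 'I_d)%type :=
  fun p q =>
    let: (c, b) := p in let: (c', b') := q in
    \sum_(a : 'I_d) \sum_(dd : 'I_d) X (a, b, c, dd) (a, b', c', dd).

Definition onB (d : nat) (U : op 'I_d) : op ('I_d * 'I_d)%type := tenso (@oneo _) U.

Definition fidelity (d k : nat) (M : 'I_k -> op ('I_d * 'I_d)%type)
  (U : 'I_k -> op 'I_d) : C :=
  \sum_(i < k)
    tro (mulo (@psiplus d)
          (mulo (onB (U i))
            (mulo (ptr_AD (mulo (embed_DA (M i)) (@state_ABCD d)))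
                  (adjo (onB (U i)))))).

End Ops.

From mathcomp Require Import all_boot all_order all_algebra.
From mathcomp Require Import cyclic separable cyclotomic.
From mathcomp Require Import ring.
Set Implicit Arguments. Unset Strict Implicit. Unset Printing Implicit Defensive.
Import Order.TTheory GRing.Theory Num.Theory.
Local Open Scope ring_scope.

(* Tracing out AD leaves the state M_i^T / d^2 on CB, so the i-th term of the
   fidelity is <<U_i| M_i |U_i>> / d^3, where |U>> = sum_{c,b} U_{cb} |c b> is the
   vectorisation of U and has squared norm d.  Since sum_j M_j = 1, each term is
   at most d / d^3, whence F <= k / d^2.  For equality take the d^2 Weyl
   operators X^t Z^s: their vectorisations are orthogonal, so the projectors
   |W>><<W| / d form a POVM; coarse-grain it into k outcomes so that outcome i
   contains the projector of its own correction U_i, making every term d / d^3. *)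

Lemma sum_delta (R : pzSemiRingType) (T : finType) (i : T) (F : T -> R) :
  \sum_j (i == j)%:R * F j = F i.
Proof.
rewrite (big_only1 i) ?eqxx ?mul1r // => j ji _.
by rewrite eq_sym (negbTE ji) mul0r.
Qed.

Lemma sum_pair (V : nmodType) (S T : finType) (F : (S * T)%type -> V) :
  \sum_p F p = \sum_a \sum_b F (a, b).
Proof. by rewrite (pair_bigA _ (fun a b => F (a, b))); apply: eq_bigr => -[]. Qed.

Lemma subr_eq_swap (V : zmodType) (x y t : V) : (x - y == t) = (x - t == y).
Proof. by rewrite !subr_eq addrC. Qed.

Lemma norm_unity_root (R : numDomainType) (n : nat) (z : R) :
  (0 < n)%N -> z ^+ n = 1 -> `|z| = 1.
Proof.
by move=> n_gt0 zn1; apply/eqP; rewrite -(pexpr_eq1 n_gt0) // -normrX zn1 normr1.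
Qed.

Lemma prim_root_exists (F : closedFieldType) (n : nat) :
  (0 < n)%N -> n%:R != 0 :> F -> exists z : F, n.-primitive_root z.
Proof.
move=> n_gt0 n_neq0; pose p : {poly F} := 'X^n - 1.
have [r Dp] := closed_field_poly_normal p.
rewrite (monicP _) ?monicXnsubC // scale1r in Dp.
have rn1 : all n.-unity_root r by apply/allP=> z; rewrite -root_prod_XsubC -Dp.
have sz_r : (n < (size r).+1)%N.
  by rewrite -(size_prod_XsubC r id) -Dp size_XnsubC.
have [|z] := hasP (has_prim_root n_gt0 rn1 _ sz_r); last by exists z.
by rewrite -separable_prod_XsubC -Dp separable_Xn_sub_1.
Qed.

Lemma exists_section (J : finType) (k : nat) :
  (0 < k)%N -> (k <= #|J|)%N ->
  exists (g : 'I_k -> J) (h : J -> 'I_k), cancel g h.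
Proof.
case: k => // k _ le_kJ.
exists (fun i => enum_val (widen_ord le_kJ i)).
exists (fun p => inord (minn (enum_rank p) k)).
move=> i; apply/val_inj; rewrite /= enum_valK /= (minn_idPl (leq_ord i)).
by rewrite inordK // ltnS leq_ord.
Qed.

Section QuadraticForms.
Variable C : numClosedFieldType.

(* [psd X] unfolds to [forall v, 0 <= qform X v]. *)
Definition qform (T : finType) (X : op C T) (v : T -> C) : C :=
  \sum_i \sum_j (v i)^* * X i j * v j.

Lemma eq_qform (T : finType) (X Y : op C T) (v w : T -> C) :
  X =2 Y -> v =1 w -> qform X v = qform Y w.
Proof.
by move=> eXY evw; apply: eq_bigr => i _; apply: eq_bigr => j _; rewrite eXY !evw.
Qed.

Lemma tro_mul_proj (T : finType) (v : T -> C) (X : op C T) :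
  tro (mulo (proj v) X) = qform X v.
Proof.
rewrite /tro /mulo /proj /qform exchange_big.
by apply: eq_bigr => i _; apply: eq_bigr => j _; ring.
Qed.

Lemma qform_sum (T I : finType) (P : pred I) (X : I -> op C T) (v : T -> C) :
  qform (fun x y => \sum_(i | P i) X i x y) v = \sum_(i | P i) qform (X i) v.
Proof.
rewrite /qform; under eq_bigr => x _ do under eq_bigr => y _ do
  rewrite big_distrr big_distrl /=.
by under eq_bigr => x _ do rewrite exchange_big; rewrite exchange_big.
Qed.

Lemma qform_mul_adj (T : finType) (A B : op C T) (v : T -> C) :
  qform (mulo A (mulo B (adjo A))) v = qform B (fun q => \sum_y (A y q)^* * v y).
Proof.
rewrite /qform /mulo /adjo.
transitivity (\sum_x \sum_y \sum_p \sum_q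
  (v x)^* * A x p * B p q * (A y q)^* * v y).
  apply: eq_bigr => x _; apply: eq_bigr => y _.
  rewrite mulr_sumr mulr_suml; apply: eq_bigr => p _.
  rewrite mulr_sumr mulr_sumr mulr_suml; apply: eq_bigr => q _; ring.
under eq_bigr => x _ do rewrite exchange_big; rewrite exchange_big.
under eq_bigr => p _ do under eq_bigr => x _ do rewrite exchange_big.
under eq_bigr => p _ do rewrite exchange_big.
apply: eq_bigr => p _; apply: eq_bigr => q _.
rewrite rmorph_sum !mulr_suml; apply: eq_bigr => x _.
rewrite mulr_sumr; apply: eq_bigr => y _.
by rewrite rmorphM /= conjCK; ring.
Qed.

Lemma qform_scale (T : finType) (c : C) (X : op C T) (v : T -> C) :
  qform (fun x y => c * X x y) v = c * qform X v.
Proof.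
rewrite /qform mulr_sumr; apply: eq_bigr => x _.
by rewrite mulr_sumr; apply: eq_bigr => y _; ring.
Qed.

Lemma qform_one (T : finType) (v : T -> C) :
  qform (@oneo C T) v = \sum_x (v x)^* * v x.
Proof.
apply: eq_bigr => x _; rewrite -(sum_delta x (fun y => (v x)^* * v y)).
by apply: eq_bigr => y _; rewrite /oneo; ring.
Qed.

Lemma qform_proj (T : finType) (u v : T -> C) :
  qform (proj u) v = `|\sum_x (v x)^* * u x| ^+ 2.
Proof.
rewrite normCK rmorph_sum /qform mulr_suml; apply: eq_bigr => x _.
rewrite mulr_sumr; apply: eq_bigr => y _.
by rewrite /proj rmorphM /= conjCK; ring.
Qed.

Lemma povm_qform_le (T : finType) (k : nat) (M : 'I_k -> op C T) (i : 'I_k)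
    (v : T -> C) :
  povm M -> qform (M i) v <= \sum_x (v x)^* * v x.
Proof.
case=> psdM sumM; rewrite -qform_one -(eq_qform sumM (frefl v)) qform_sum.
by rewrite (bigD1 i) //= lerDl sumr_ge0 // => j _; apply: psdM.
Qed.

Lemma povm_coarse (T J : finType) (k : nat)
    (P : J -> op C T) (h : J -> 'I_k) :
  (forall p, psd (P p)) -> (forall x y, \sum_p P p x y = @oneo C T x y) ->
  povm (fun i x y => \sum_(p | h p == i) P p x y).
Proof.
move=> psdP sumP; split=> [i v | x y].
  by rewrite -/(qform _ v) qform_sum sumr_ge0 // => p _; apply: psdP.
by rewrite -sumP (partition_big h xpredT).
Qed.

End QuadraticForms.

Section Teleportation.
Variables (C : numClosedFieldType) (d : nat).

Lemma psiplusE (x y : 'I_d * 'I_d) :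
  @psiplus C d x y = (x.1 == x.2)%:R * (y.1 == y.2)%:R / d%:R.
Proof.
rewrite /psiplus /proj /psiplus_vec rmorphM /= conjC_nat fmorphV /=.
by rewrite geC0_conj ?sqrtC_ge0 ?ler0n // mulrACA -invfM -expr2 sqrtCK.
Qed.

Lemma sum_idx4 (F : idx4 d -> C) :
  \sum_l F l = \sum_a \sum_b \sum_c \sum_dd F (a, b, c, dd).
Proof. by rewrite sum_pair sum_pair sum_pair. Qed.

Lemma mulo_embed_stateE (M : op C ('I_d * 'I_d)%type) a b c dd a' b' c' dd' :
  mulo (embed_DA M) (@state_ABCD C d) (a, b, c, dd) (a', b', c', dd') =
  M (dd, a) (c, b) * (a' == b')%:R * (c' == dd')%:R / d%:R ^+ 2.
Proof.
rewrite /mulo sum_idx4 exchange_big /=.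
transitivity (\sum_b1 (b == b1)%:R * \sum_a1 (b1 == a1)%:R *
  \sum_c1 (c == c1)%:R * \sum_d1 (c1 == d1)%:R *
    (M (dd, a) (d1, a1) * (a' == b')%:R * (c' == dd')%:R / d%:R ^+ 2)).
  apply: eq_bigr => b1 _; rewrite mulr_sumr; apply: eq_bigr => a1 _.
  rewrite !mulr_sumr; apply: eq_bigr => c1 _; rewrite !mulr_sumr.
  apply: eq_bigr => d1 _; rewrite /embed_DA /state_ABCD !psiplusE /oneo /=.
  by rewrite [b1 == a1]eq_sym expr2 invfM; ring.
by rewrite !sum_delta.
Qed.

Lemma ptr_AD_embed_stateE (M : op C ('I_d * 'I_d)%type) p q :
  ptr_AD (mulo (embed_DA M) (@state_ABCD C d)) p q = M q p / d%:R ^+ 2.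
Proof.
case: p q => c b [c' b']; rewrite /ptr_AD.
transitivity (\sum_a (b' == a)%:R * \sum_dd (c' == dd)%:R *
  (M (dd, a) (c, b) / d%:R ^+ 2)).
  apply: eq_bigr => a _; rewrite mulr_sumr; apply: eq_bigr => dd _.
  by rewrite mulo_embed_stateE [a == b']eq_sym; ring.
by rewrite !sum_delta.
Qed.

Definition vec_op (U : op C 'I_d) (x : 'I_d * 'I_d) : C := U x.1 x.2.

Lemma onB_adj_psiplus (U : op C 'I_d) (q : 'I_d * 'I_d) :
  \sum_y (onB U y q)^* * @psiplus_vec C d y = (vec_op U q)^* / sqrtC d%:R.
Proof.
case: q => c b; rewrite sum_pair.
transitivity (\sum_c1 (c == c1)%:R * \sum_b1 (c1 == b1)%:R *
  ((U b1 b)^* / sqrtC d%:R)).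
  apply: eq_bigr => c1 _; rewrite mulr_sumr; apply: eq_bigr => b1 _.
  by rewrite /onB /tenso /oneo /psiplus_vec rmorphM /= conjC_nat eq_sym; ring.
by rewrite !sum_delta.
Qed.

Lemma fidelity_termE (M : op C ('I_d * 'I_d)%type) (U : op C 'I_d) :
  tro (mulo (@psiplus C d)
        (mulo (onB U)
          (mulo (ptr_AD (mulo (embed_DA M) (@state_ABCD C d))) (adjo (onB U))))) =
  qform M (vec_op U) / d%:R ^+ 3.
Proof.
rewrite /psiplus tro_mul_proj qform_mul_adj.
rewrite (eq_qform (@ptr_AD_embed_stateE M) (onB_adj_psiplus U)).
rewrite /qform mulr_suml exchange_big; apply: eq_bigr => p _.
rewrite mulr_suml; apply: eq_bigr => q _.
rewrite rmorphM /= conjCK fmorphV /= geC0_conj ?sqrtC_ge0 ?ler0n //.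
set s := sqrtC _; have -> : (d%:R : C) = s ^+ 2 by rewrite sqrtCK.
by rewrite -!exprM -!exprVn; ring.
Qed.

Lemma fidelityE (k : nat) (M : 'I_k -> op C ('I_d * 'I_d)%type)
    (U : 'I_k -> op C 'I_d) :
  fidelity M U = \sum_i qform (M i) (vec_op (U i)) / d%:R ^+ 3.
Proof. by apply: eq_bigr => i _; rewrite fidelity_termE. Qed.

Lemma unitary_vec_norm (U : op C 'I_d) :
  unitary U -> \sum_x (vec_op U x)^* * vec_op U x = d%:R.
Proof.
case=> UUadj _; rewrite sum_pair (eq_bigr (fun=> 1)) ?sumr_const ?card_ord //.
move=> c _; have := UUadj c c; rewrite /oneo eqxx mulr1n => <-.
by apply: eq_bigr => b _; rewrite mulrC.
Qed.

Lemma sum_fidelity_const (k : nat) :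
  (0 < d)%N -> \sum_(i < k) d%:R / d%:R ^+ 3 = k%:R / (d ^ 2)%:R :> C.
Proof.
move=> d_gt0; rewrite sumr_const card_ord -mulr_natl natrX; field.
by rewrite pnatr_eq0 -lt0n.
Qed.

Lemma fidelity_le (k : nat) (M : 'I_k -> op C ('I_d * 'I_d)%type)
    (U : 'I_k -> op C 'I_d) :
  (0 < d)%N -> povm M -> (forall i, unitary (U i)) ->
  fidelity M U <= k%:R / (d ^ 2)%:R.
Proof.
move=> d_gt0 povmM unitaryU; rewrite fidelityE.
apply: (@le_trans _ _ (\sum_(i < k) d%:R / d%:R ^+ 3)).
  apply: ler_sum => i _; rewrite ler_wpM2r ?invr_ge0 ?exprn_ge0 ?ler0n //.
  by rewrite -(unitary_vec_norm (unitaryU i)) povm_qform_le.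
by rewrite sum_fidelity_const.
Qed.

End Teleportation.

Section WeylBasis.
Variables (C : numClosedFieldType) (n : nat) (w : C).
Local Notation d := n.+2.
Hypothesis w_prim : d.-primitive_root w.

(* The shift by [t] composed with the clock [Z^s], [Z] = diag (w ^+ y). *)
Definition weyl (s t : 'I_d) : op C 'I_d :=
  fun x y => (x - y == t)%:R * w ^+ (y * s).

Lemma expr_prim_root_conj (m : nat) : w ^+ m * (w ^+ m)^* = 1.
Proof.
by rewrite -normCK normrX (norm_unity_root _ (prim_expr_order w_prim)) // !expr1n.
Qed.

Lemma weyl_unitary (s t : 'I_d) : unitary (weyl s t).
Proof.
split=> x x'; rewrite /mulo /adjo /weyl /oneo.
  transitivity (\sum_y (x - t == y)%:R *
    ((x' - t == y)%:R * (w ^+ (y * s) * (w ^+ (y * s))^* ))).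
    apply: eq_bigr => y _; rewrite rmorphM /= conjC_nat.
    by rewrite !(subr_eq_swap _ y); ring.
  by rewrite sum_delta expr_prim_root_conj mulr1 (inj_eq (addIr _)) eq_sym.
transitivity (\sum_y (t + x == y)%:R *
  ((t + x' == y)%:R * ((w ^+ (x * s))^* * w ^+ (x' * s)))).
  apply: eq_bigr => y _; rewrite rmorphM /= conjC_nat.
  by rewrite !(eq_sym _ y) -!subr_eq; ring.
rewrite sum_delta (inj_eq (addrI _)) eq_sym.
by case: eqP => [->|_]; rewrite ?mul0r // mul1r mulrC expr_prim_root_conj.
Qed.

Lemma sum_expr_prim_root_conj (a b : 'I_d) :
  \sum_(s < d) (w ^+ a * (w ^+ b)^*) ^+ s = (a == b)%:R * d%:R.
Proof.
have [<-|neq_ab] := eqVneq a b.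
  rewrite expr_prim_root_conj (eq_bigr (fun=> 1)) => [|s _]; last exact: expr1n.
  by rewrite sumr_const card_ord mul1r.
set z := _ * _; have zd1 : z ^+ d = 1.
  rewrite exprMn -rmorphXn -!exprM ![(_ * d)%N]mulnC !exprM.
  by rewrite (prim_expr_order w_prim) !expr1n rmorph1 mulr1.
have z_neq1 : z != 1.
  apply: contra neq_ab => /eqP z1; have : w ^+ a = w ^+ b.
    by rewrite -[LHS]mulr1 -(expr_prim_root_conj b) mulrCA -/z z1 mulr1.
  by move/eqP; rewrite (eq_prim_root_expr w_prim) !modn_small.
have := expfS_eq1 z n.+1; rewrite zd1 eqxx (negbTE z_neq1) => /esym/eqP ->.
by rewrite mul0r.
Qed.

Definition weyl_proj (g : 'I_d * 'I_d) : op C ('I_d * 'I_d)%type :=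
  fun x y => d%:R^-1 * proj (vec_op (weyl g.1 g.2)) x y.

Lemma weyl_proj_psd (g : 'I_d * 'I_d) : psd (weyl_proj g).
Proof.
move=> v; rewrite -/(qform _ v) qform_scale qform_proj.
by rewrite mulr_ge0 ?invr_ge0 ?ler0n ?exprn_ge0.
Qed.

Lemma sum_weyl_proj (x y : 'I_d * 'I_d) : \sum_g weyl_proj g x y = oneo C x y.
Proof.
case: x y => x1 x2 [y1 y2].
transitivity (\sum_t (x1 - x2 == t)%:R * ((y1 - y2 == t)%:R * d%:R^-1 *
  \sum_(s < d) (w ^+ x2 * (w ^+ y2)^*) ^+ s)).
  rewrite sum_pair exchange_big; apply: eq_bigr => t _; rewrite !mulr_sumr.
  apply: eq_bigr => s _; rewrite /weyl_proj /proj /vec_op /weyl /=.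
  by rewrite rmorphM /= conjC_nat exprMn -rmorphXn -!exprM; ring.
rewrite sum_delta sum_expr_prim_root_conj /oneo xpair_eqE.
have [<-|_] := eqVneq x2 y2; last by rewrite andbF mul0r mulr0.
by rewrite (inj_eq (addIr _)) eq_sym andbT mul1r mulfVK ?pnatr_eq0.
Qed.

Lemma qform_weyl_proj (g : 'I_d * 'I_d) :
  qform (weyl_proj g) (vec_op (weyl g.1 g.2)) = d%:R.
Proof.
rewrite qform_scale qform_proj (unitary_vec_norm (weyl_unitary _ _)).
by rewrite normr_nat mulKf ?pnatr_eq0.
Qed.
End WeylBasis.

Lemma fidelity_optimal (C : numClosedFieldType) (d k : nat) :
  (2 <= d)%N -> (0 < k)%N -> (k <= d ^ 2)%N ->
  exists (M : 'I_k -> op C ('I_d * 'I_d)%type) (U : 'I_k -> op C 'I_d),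
    povm M /\ (forall i, unitary (U i)) /\ fidelity M U = k%:R / (d ^ 2)%:R.
Proof.
case: d => [|[|n]] // _ k_gt0 le_k_d2.
have [w w_prim] : exists w : C, n.+2.-primitive_root w.
  by apply: prim_root_exists; rewrite // pnatr_eq0.
have [g [h gK]] : exists (g : 'I_k -> 'I_n.+2 * 'I_n.+2) h, cancel g h.
  by apply: exists_section; rewrite // card_prod !card_ord mulnn.
(* [h] sends the Weyl projector of [U i] = [weyl (g i)] to outcome [i]. *)
pose M i x y := \sum_(p | h p == i) weyl_proj w p x y.
pose U i := weyl w (g i).1 (g i).2.
have povmM : povm M :=
  povm_coarse h (@weyl_proj_psd C n w) (sum_weyl_proj w_prim).
have unitaryU i : unitary (U i) := weyl_unitary w_prim _ _.
exists M, U; do !split=> //.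
have qformM i : qform (M i) (vec_op (U i)) = n.+2%:R.
  apply/eqP; rewrite eq_le -{1}(unitary_vec_norm (unitaryU i)) povm_qform_le //=.
  rewrite qform_sum (bigD1 (g i)) ?gK //= (qform_weyl_proj w_prim) lerDl.
  by rewrite sumr_ge0 // => p _; apply: weyl_proj_psd.
rewrite fidelityE (eq_bigr (fun=> n.+2%:R / n.+2%:R ^+ 3)) => [|i _]; last first.
  by rewrite qformM.
by rewrite sum_fidelity_const.
Qed.

Theorem proposition1 (C : numClosedFieldType) (d k : nat) :
  (2 <= d)%N -> (1 <= k)%N -> (k <= d ^ 2)%N ->
  (forall (M : 'I_k -> op C ('I_d * 'I_d)%type) (U : 'I_k -> op C 'I_d),
      povm M -> (forall i, unitary (U i)) ->
      fidelity M U <= k%:R / (d ^ 2)%:R) /\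
  (exists (M : 'I_k -> op C ('I_d * 'I_d)%type) (U : 'I_k -> op C 'I_d),
      povm M /\ (forall i, unitary (U i)) /\
      fidelity M U = k%:R / (d ^ 2)%:R).
Proof.
move=> d_ge2 k_gt0 le_k_d2; split; last exact: fidelity_optimal.
by move=> M U; apply: fidelity_le; apply: leq_trans d_ge2.
Qed.
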